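(* Let $Y$ be any one of the following varieties, or any secant variety $\sigma_r(Y)$, $r\ge1$, of one of them: (a) the Grassmannian $\mathbb{G}(k,n)\subset\mathbb{P}\bigwedge^k\mathbb{C}^n$ in its Plücker embedding, $1\le k<n$; (b) the tangential variety $\tau_{d,n}=\overline{\{[L^{d-1}M]\}}\subset\mathbb{P}\mathrm{Sym}^d\mathbb{C}^{n+1}$, $d,n\ge1$; (c) the Chow variety $\mathbb{X}_{d,n}=\{[L_1\cdots L_d]: L_i\in(\mathbb{C}^{n+1})^\vee\}\subset\mathbb{P}\mathrm{Sym}^d\mathbb{C}^{n+1}$; (d) the variety of reducible forms $\mathcal{R}_{\mathbf{d},n}=\{[F_1\cdots F_k]: F_i\in\mathrm{Sym}^{d_i}\mathbb{C}^{n+1}\}\subset\mathbb{P}\mathrm{Sym}^d\mathbb{C}^{n+1}$ for fixed positive integers $\mathbf{d}=(d_1,\dots,d_k)$ with $d_1+\cdots+d_k=d$. Then $\operatorname{Hrk}_Y(p)<\infty$ for every point $p$ of the ambient projective space. For example, for every $r\ge1$ every homogeneous polynomial of degree $d$ is a coefficient-wise product of finitely many polynomials of the form $\sum_{i=1}^r L_i^{d-1}M_i$ with $L_i,M_i$ linear.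
   Context: Ambient spaces use the standard coordinates: Plücker coordinates on $\mathbb{P}\bigwedge^k\mathbb{C}^n$, monomial coefficients on $\mathbb{P}\mathrm{Sym}^d\mathbb{C}^{n+1}$ (degree-$d$ forms in $x_0,\dots,x_n$). Hadamard product of points: $(p_0:\cdots:p_N)\star(q_0:\cdots:q_N)=(p_0q_0:\cdots:p_Nq_N)$, defined when not all $p_iq_i$ vanish. For a variety $X$, $\operatorname{Hrk}_X(q)=\min\{m\mid q=p_1\star\cdots\star p_m,\ p_i\in X\}$, or $\infty$ if no such decomposition exists. $\sigma_r(Y)$ denotes the Zariski closure of the union of linear spans of $r$ points of $Y$. *)

From HB Require Import structures.
From mathcomp Require Import all_boot all_order all_algebra.
From mathcomp Require Import reals.
From mathcomp Require Import complex.
From mathcomp Require Import mpoly.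

Set Implicit Arguments.
Unset Strict Implicit.
Unset Printing Implicit Defensive.

Import Order.TTheory GRing.Theory Num.Theory.
Local Open Scope ring_scope.

(* Projective space P(C^I) is represented through affine cones: a vector     *)
(* q : I -> C with some nonzero coordinate represents the point [q]; a       *)
(* projective variety X is represented by its affine cone, a predicate on    *)
(* I -> C.  A point [q] lies in X iff q is a nonzero vector of the cone.     *)

Section Ambient.
Variable (C : fieldType) (I : finType).

Definition nonzero_vec (q : I -> C) : Prop := exists j, q j != 0.

Definition hadamard_prod (m : nat) (ps : 'I_m -> I -> C) : I -> C :=
  fun j => \prod_(i < m) ps i j.

(* [q] = [p_1] * ... * [p_m] with all [p_i] points of X (Hadamard product
   defined, i.e. the product is a nonzero vector, and equal to [q]). *)
Definition hadamard_decomp (X : (I -> C) -> Prop) (q : I -> C) (m : nat)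
  (ps : 'I_m -> I -> C) : Prop :=
  (forall i, X (ps i) /\ nonzero_vec (ps i)) /\
  nonzero_vec (hadamard_prod ps) /\
  exists c : C, c != 0 /\ forall j, q j = c * hadamard_prod ps j.

Definition Hrk_finite (X : (I -> C) -> Prop) (q : I -> C) : Prop :=
  exists m : nat, (0 < m)%N /\ exists ps : 'I_m -> I -> C, hadamard_decomp X q ps.

(* Zariski closure in the affine space C^I (closure of a cone = cone of the
   projective closure). Polynomials in #|I| variables, coordinate j of the
   polynomial ring corresponds to enum_val j. *)
Definition zariski_closure (S : (I -> C) -> Prop) : (I -> C) -> Prop :=
  fun x => forall P : {mpoly C[#|I|]},
    (forall y, S y -> P.@[fun j => y (enum_val j)] = 0) ->
    P.@[fun j => x (enum_val j)] = 0.

(* affine cone of sigma_r(Y): closure of the union of the linear spans of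
   r points of Y *)
Definition secant (r : nat) (X : (I -> C) -> Prop) : (I -> C) -> Prop :=
  zariski_closure (fun v => exists (a : 'I_r -> C) (vs : 'I_r -> I -> C),
    (forall i, X (vs i)) /\ forall j, v j = \sum_(i < r) a i * vs i j).

End Ambient.

(* Plücker coordinates of wedge^k C^n are indexed by strictly increasing
   maps 'I_k -> 'I_n (basis e_{f 0} /\ ... /\ e_{f (k-1)}). *)
Definition pluecker_idx (k n : nat) :=
  {f : {ffun 'I_k -> 'I_n} | [forall i : 'I_k, forall j : 'I_k, (i < j)%N ==> (f i < f j)%N]}.

Definition pluecker (C : fieldType) (k n : nat) (M : 'M[C]_(k, n))
  (f : pluecker_idx k n) : C :=
  \det (\matrix_(i < k, j < k) M i (val f j)).

(* cone over G(k,n): Plücker vectors v_1 /\ ... /\ v_k (rows of M) *)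
Definition grassmannian (C : fieldType) (k n : nat) : (pluecker_idx k n -> C) -> Prop :=
  fun v => exists M : 'M[C]_(k, n), forall f, v f = pluecker M f.

(* monomial coefficients: index = monomials x^e in x_0..x_n of degree d *)
Definition mon_idx (n d : nat) := {m : 'X_{1..n.+1 < d.+1} | mdeg (val m) == d}.

Definition form_coords (C : fieldType) (n d : nat) (P : {mpoly C[n.+1]}) :
  mon_idx n d -> C := fun e => P@_(val (val e)).

Definition tangential (C : fieldType) (n d : nat) : (mon_idx n d -> C) -> Prop :=
  zariski_closure (fun v => exists L M : {mpoly C[n.+1]},
    L \is 1.-homog /\ M \is 1.-homog /\
    forall e, v e = @form_coords _ _ d (L ^+ d.-1 * M) e).

Definition chow (C : fieldType) (n d : nat) : (mon_idx n d -> C) -> Prop :=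
  fun v => exists Ls : 'I_d -> {mpoly C[n.+1]},
    (forall i, Ls i \is 1.-homog) /\
    forall e, v e = @form_coords _ _ d (\prod_(i < d) Ls i) e.

Definition reducible (C : fieldType) (n : nat) (ds : seq nat) :
  (mon_idx n (sumn ds) -> C) -> Prop :=
  fun v => exists Fs : 'I_(size ds) -> {mpoly C[n.+1]},
    (forall i, Fs i \is (nth 0%N ds i).-homog) /\
    forall e, v e = @form_coords _ _ (sumn ds) (\prod_(i < size ds) Fs i) e.

Definition Y_or_secant (C : fieldType) (I : finType) (Y : (I -> C) -> Prop)
  (X : (I -> C) -> Prop) : Prop :=
  X = Y \/ exists r : nat, (1 <= r)%N /\ X = secant r Y.

(* If a cone X contains a pencil [z |-> g * (phi - z)] (coordinatewise, g nowhere zero,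
   phi injective on the N coordinates), every nonzero q is a Hadamard product of N members
   of the pencil: interpolate [q / g^N] at the nodes [phi j] by a polynomial P of degree
   < N, factor the monic [prod_l (x - phi l) + P = prod_i (x - r_i)] over the algebraically
   closed field, and evaluate at [phi j].
   Every variety in the list contains such a pencil.  For forms of degree d+1 it consists
   of the forms [L^d M] with [L = sum_i x_i] and [M = sum_i (B^i - z/(d+1)) x_i], which are
   tangential, products of linear forms and reducible.  For G(k,n) it consists of the
   Pluecker vectors of the k x n matrices with columns [(t_l^k - z, t_l, ..., t_l^(k-1))],
   [t_l = 2^(2^l)]: each Pluecker coordinate is a Vandermonde determinant times
   [± prod_j t_(f j) - z].  Finally, Y lies in each of its secant varieties. *)

From HB Require Import structures.
From mathcomp Require Import all_boot all_order all_algebra.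
From mathcomp Require Import reals complex mpoly.
From mathcomp Require Import ring perm.
Set Implicit Arguments.
Unset Strict Implicit.
Unset Printing Implicit Defensive.
Import Order.TTheory GRing.Theory Num.Theory.
Local Open Scope ring_scope.

Section Pencil.
Variable I : finType.

Lemma lagrange_interpolation (F : fieldType) (phi h : I -> F) : injective phi ->
  exists2 P : {poly F}, (size P <= #|I|)%N & forall j, P.[phi j] = h j.
Proof.
move=> phi_inj; pose lag j := \prod_(l | l != j) ('X - (phi l)%:P).
have lagE j l : (lag j).[phi l] = (j == l)%:R * (lag j).[phi j].
  rewrite !horner_prod; have [<-|ne_jl] := eqVneq j l; first by rewrite mul1r.
  by rewrite mul0r (bigD1 l) 1?eq_sym //= hornerXsubC subrr mul0r.
have lag_neq0 j : (lag j).[phi j] != 0.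
  rewrite horner_prod; apply/prodf_neq0 => l ne_lj.
  by rewrite hornerXsubC subr_eq0 (inj_eq phi_inj) eq_sym.
exists (\sum_j (h j / (lag j).[phi j]) *: lag j).
  apply: leq_trans (size_sum _ _ _) _; apply/bigmax_leqP => j _.
  apply: leq_trans (size_scale_leq _ _) _.
  rewrite /lag -(big_enum _ _ (predC1 j)) size_prod_XsubC -cardE cardC1.
  by rewrite prednK //; apply/card_gt0P; exists j.
move=> l; rewrite horner_sum (bigD1 l) //= big1 => [|j ne_jl].
  by rewrite hornerZ lagE eqxx mul1r divfK ?addr0.
by rewrite hornerZ (lagE j l) (negbTE ne_jl) mul0r mulr0.
Qed.

Lemma interpolation_by_roots (C : closedFieldType) (phi h : I -> C) :
  injective phi ->
  exists2 r : seq C, size r = #|I| & forall j, \prod_(z <- r) (phi j - z) = h j.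
Proof.
move=> phi_inj; have [P size_P P_h] := lagrange_interpolation h phi_inj.
pose Q := \prod_(l <- enum I) ('X - (phi l)%:P).
have size_Q : size Q = #|I|.+1 by rewrite size_prod_XsubC cardE.
have Q_phi j : Q.[phi j] = 0.
  rewrite horner_prod (bigD1_seq j) ?mem_enum ?enum_uniq //=.
  by rewrite hornerXsubC subrr mul0r.
have [r QP_r] := closed_field_poly_normal (Q + P).
have QP_monic : Q + P \is monic.
  by rewrite monicE lead_coefDl ?size_Q ?ltnS // -monicE monic_prod_XsubC.
rewrite (monicP QP_monic) scale1r in QP_r; exists r.
  by apply/eq_add_S; rewrite -(size_prod_XsubC r id) -QP_r size_polyDl size_Q ?ltnS.
move=> j; rewrite -P_h -[P.[_]]add0r -(Q_phi j) -hornerD QP_r horner_prod.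
by apply: eq_bigr => z _; rewrite hornerXsubC.
Qed.

Lemma Hrk_finite_pencil (C : closedFieldType) (X : (I -> C) -> Prop)
    (g phi : I -> C) (v : C -> I -> C) :
  (forall j, g j != 0) -> injective phi ->
  (forall z, X (v z)) -> (forall z j, v z j = g j * (phi j - z)) ->
  forall q, nonzero_vec q -> Hrk_finite X q.
Proof.
move=> g_neq0 phi_inj Xv vE q [j0 qj0_neq0].
have [r size_r r_q] := interpolation_by_roots (fun j => q j / g j ^+ #|I|) phi_inj.
pose ps (i : 'I_#|I|) := v (r`_i).
have ps_q j : hadamard_prod ps j = q j.
  rewrite /hadamard_prod /ps; under eq_bigr do rewrite vE.
  rewrite big_split prodr_const card_ord /=.
  have -> : \prod_(i < #|I|) (phi j - r`_i) = \prod_(z <- r) (phi j - z).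
    by rewrite (big_nth 0) size_r big_mkord.
  by rewrite r_q mulrC divfK ?expf_neq0.
exists #|I|; split; first by apply/card_gt0P; exists j0.
exists ps; split; [move=> i; split; first exact: Xv | split].
- exists j0; apply: contra qj0_neq0 => /eqP ps_i0.
  by rewrite -ps_q /hadamard_prod (bigD1 i) //= ps_i0 mul0r.
- by exists j0; rewrite ps_q.
- by exists 1; split => [|j]; rewrite ?oner_neq0 ?mul1r ?ps_q.
Qed.

Lemma Hrk_finite_subsingleton (F : fieldType) (X : (I -> F) -> Prop) (v : I -> F) :
  (forall j j' : I, j = j') -> X v -> (forall j, v j != 0) ->
  forall q, nonzero_vec q -> Hrk_finite X q.
Proof.
move=> I_eq Xv v_neq0 q [j0 qj0_neq0].
have v_prod j : hadamard_prod (fun _ : 'I_1 => v) j = v j by rewrite /hadamard_prod big_ord1.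
exists 1%N; split => //; exists (fun _ => v); split; [|split].
- by move=> _; split => //; exists j0.
- by exists j0; rewrite v_prod.
- exists (q j0 / v j0); split => [|j]; first by rewrite mulf_neq0 ?invr_eq0.
  by rewrite v_prod (I_eq j j0) divfK.
Qed.

End Pencil.

Lemma sum_digits_inj B n (a b : 'I_n -> nat) :
  (forall i, a i < B)%N -> (forall i, b i < B)%N ->
  (\sum_i a i * B ^ i = \sum_i b i * B ^ i)%N -> a =1 b.
Proof.
elim: n a b => [|n IHn] a b a_lt b_lt; first by move=> _ [].
have shift (c : 'I_n.+1 -> nat) :
    (\sum_i c i * B ^ i = c ord0 + B * \sum_(i < n) c (lift ord0 i) * B ^ i)%N.
  rewrite big_ord_recl expn0 muln1 big_distrr; congr (_ + _)%N.
  by apply: eq_bigr => i _; rewrite lift0 expnS mulnCA.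
rewrite !shift => ab_eq.
have ab0 : a ord0 = b ord0.
  move/(congr1 (modn^~ B)): ab_eq.
  by rewrite ![(_ + B * _)%N]addnC !(mulnC B) !modnMDl !modn_small.
move: ab_eq; rewrite ab0 => /addnI /eqP; rewrite eqn_mul2l => /orP [/eqP B0|/eqP ab_eq].
  by move: (a_lt ord0); rewrite B0.
move=> i; case: (unliftP ord0 i) => [j ->|-> //].
exact: (IHn (fun j => a (lift ord0 j)) (fun j => b (lift ord0 j))).
Qed.

Section IncreasingMaps.
Local Open Scope nat_scope.
Variables k n : nat.
Implicit Types f g : 'I_k -> 'I_n.

Lemma sum_expn_fibres B f :
  \sum_j B ^ f j = \sum_(l < n) (\sum_j (f j == l)) * B ^ l.
Proof.
rewrite (eq_bigr (fun j => \sum_(l < n) (f j == l) * B ^ l)) => [|j _].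
  by rewrite exchange_big; apply: eq_bigr => l _; rewrite big_distrl.
rewrite (bigD1 (f j)) //= eqxx mul1n big1 ?addn0 // => l.
by rewrite eq_sym => /negbTE ->.
Qed.

Lemma fibre_card_le1 f : injective f -> forall l, \sum_j (f j == l) < 2.
Proof.
move=> f_inj l; case: (pickP (fun j => f j == l)) => [j0 /eqP fj0 | no_j].
  rewrite (bigD1 j0) //= fj0 eqxx big1 // => j ne_j0.
  by apply/eqP; rewrite eqb0 -fj0 (inj_eq f_inj).
by rewrite big1 // => j _; rewrite no_j.
Qed.

Lemma incr_eq_of_fibres f g :
  {homo f : i j / i < j} -> {homo g : i j / i < j} ->
  (forall l, \sum_j (f j == l) = \sum_j (g j == l)) -> f =1 g.
Proof.
move=> f_incr g_incr fibres_eq.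
pose s (h : 'I_k -> 'I_n) := [seq val (h j) | j <- enum 'I_k].
have s_sorted (h : 'I_k -> 'I_n) : {homo h : i j / i < j} -> sorted ltn (s h).
  move=> h_incr; rewrite /s -map_comp; apply: (homo_sorted (e := fun i j : 'I_k => i < j)).
    by move=> i j /h_incr.
  by have := iota_ltn_sorted 0 k; rewrite -val_enum_ord sorted_map enumT unlock.
have mem_s (h : 'I_k -> 'I_n) x : (x \in s h) = (\sum_j (val (h j) == x) != 0).
  rewrite sum_nat_eq0 negb_forall; apply/mapP/existsP => [[j _ ->]|[j]].
    by exists j; rewrite eqxx.
  by rewrite /= eqb0 negbK => /eqP <-; exists j; rewrite ?mem_enum.
have s_eq : s f = s g.
  apply: (irr_sorted_eq ltn_trans ltnn); rewrite ?s_sorted // => x; rewrite !mem_s.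
  case: (ltnP x n) => [x_lt|x_ge].
    by have := fibres_eq (Ordinal x_lt); under eq_bigr do rewrite -val_eqE; move=> ->.
  have fibre0 (h : 'I_k -> 'I_n) : \sum_j (val (h j) == x) = 0.
    by apply: big1 => j _; apply/eqP; rewrite eqb0 neq_ltn (leq_trans (ltn_ord _) x_ge).
  by rewrite !fibre0.
move=> j; move/(congr1 (nth 0 ^~ j)): s_eq.
by rewrite /s !(nth_map j) -?enumT ?size_enum_ord // nth_ord_enum => /val_inj.
Qed.

End IncreasingMaps.

Section TangentForm.
Variables (R : comNzRingType) (n : nat).
Implicit Types (p : {mpoly R[n]}) (e : 'X_{1..n}).

Definition sumX : {mpoly R[n]} := \sum_i 'X_i.

Definition tangent_form (d : nat) (b : 'I_n -> R) : {mpoly R[n]} :=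
  sumX ^+ d * \sum_i b i *: 'X_i.

Lemma linear_form_homog (b : 'I_n -> R) : \sum_i b i *: 'X_i \is 1.-homog.
Proof. by apply: rpred_sum => i _; rewrite rpredZ // dhomogX; apply/mdeg1P; exists i. Qed.

Lemma sumX_homog : sumX \is 1.-homog.
Proof. by apply: rpred_sum => i _; rewrite dhomogX; apply/mdeg1P; exists i. Qed.

Lemma mderiv_sumX i : sumX^`M(i) = 1.
Proof.
rewrite linear_sum (bigD1 i) //= mderivX mnm1E eqxx -{1}[U_(i)%MM]add0m addmK.
rewrite mpolyX0 scale1r big1 ?addr0 // => j ne_ji.
by rewrite mderivX mnm1E (negbTE ne_ji) scale0r.
Qed.

Lemma mderiv_exp p i d : (p ^+ d.+1)^`M(i) = (p ^+ d * p^`M(i)) *+ d.+1.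
Proof.
elim: d => [|d IHd]; first by rewrite expr1 expr0 mul1r.
by rewrite exprS mderivM IHd -mulrnAr mulrA -exprS mulrnAr [_^`M(i) * _]mulrC -mulrS.
Qed.

Lemma mcoeff_mderivMX p i e : (p^`M(i) * 'X_i)@_e = p@_e *+ e i.
Proof.
case e_i: (e i) => [|k].
  rewrite mulr0n mcoeffM big1 // => -[m1 m2] /= /eqP e_m.
  rewrite mcoeffX; case: eqP => [m2_i|]; last by rewrite mulr0.
  by move/(congr1 (fun m : 'X_{1..n} => m i)): e_m; rewrite mnmDE -m2_i mnm1E eqxx e_i addn1.
have Ui_le : (U_(i) <= e)%MM by rewrite lep1mP e_i.
have {1}-> : e = (U_(i) + (e - U_(i)))%MM by rewrite addmC submK.
by rewrite mcoeffMX mcoeff_mderiv submK // mnmBE mnm1E eqxx e_i subn1.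
Qed.

(* [x_i d/dx_i] multiplies the coefficient at [x^e] by [e_i], and
   [sum_i b_i x_i d/dx_i (L^(d+1)) = (d+1) L^d (sum_i b_i x_i)]. *)
Lemma mcoeff_tangent_form d b e :
  (tangent_form d b)@_e *+ d.+1 = (\sum_i b i * (e i)%:R) * (sumX ^+ d.+1)@_e.
Proof.
rewrite -mcoeffMn.
have -> : tangent_form d b *+ d.+1 = \sum_i b i *: ((sumX ^+ d.+1)^`M(i) * 'X_i).
  rewrite /tangent_form mulr_sumr -sumrMnl; apply: eq_bigr => i _.
  by rewrite mderiv_exp mderiv_sumX mulr1 -scalerAr scalerMnr mulrnAl.
rewrite raddf_sum mulr_suml; apply: eq_bigr => i _.
by rewrite /= mcoeffZ mcoeff_mderivMX -[_ *+ e i]mulr_natr mulrA mulrAC.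
Qed.

Lemma tangent_form_homog d b : tangent_form d b \is d.+1.-homog.
Proof.
have := dhomogM (dhomogMn d sumX_homog) (linear_form_homog b).
by rewrite mul1n addn1.
Qed.

Lemma tangent_form_prod d b :
  tangent_form d b = \prod_(i < d.+1) (if (i < d)%N then sumX else \sum_i b i *: 'X_i).
Proof.
rewrite big_ord_recr /= ltnn /tangent_form -[in LHS](card_ord d) -prodr_const.
by congr (_ * _); apply: eq_bigr => i _; rewrite /= ltn_ord.
Qed.

End TangentForm.

Lemma mcoeff_sumX_exp_neq0 (R : numDomainType) n d (e : 'X_{1..n}) :
  mdeg e = d -> (sumX R n ^+ d)@_e != 0.
Proof.
elim: d e => [|d IHd] e deg_e.
  by move/eqP: deg_e; rewrite mdeg_eq0 => /eqP ->; rewrite expr0 mcoeff1 eqxx oner_neq0.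
have [i e_i] : exists i, (0 < e i)%N.
  apply/existsP; apply: contraPT deg_e; rewrite negb_exists => /forallP e0.
  by rewrite mdegE big1 // => i _; move: (e0 i); rewrite lt0n negbK => /eqP.
have Ui_le : (U_(i) <= e)%MM by rewrite lep1mP -lt0n.
have deg_e' : mdeg (e - U_(i))%MM = d.
  by apply/eq_add_S; rewrite -deg_e -{2}(submK Ui_le) mdegD mdeg1 addn1.
have := mcoeff_mderiv i (sumX R n ^+ d.+1) (e - U_(i)).
rewrite mderiv_exp mderiv_sumX mulr1 mcoeffMn submK // => coef_eq.
apply: contraTneq (IHd _ deg_e') => coef0; apply/negPn.
by move: coef_eq; rewrite coef0 mul0rn => /eqP; rewrite mulrn_eq0.
Qed.

Lemma mnm_le_mdeg n (m : 'X_{1..n}) i : (m i <= mdeg m)%N.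
Proof. by rewrite mdegE (bigD1 i) //= leq_addr. Qed.

Lemma Hrk_finite_deg0 (F : fieldType) n (X : (mon_idx n 0 -> F) -> Prop) :
  X (@form_coords F n 0 1) -> forall q, nonzero_vec q -> Hrk_finite X q.
Proof.
have mon0 (e : mon_idx n 0) : val (val e) = 0%MM.
  by apply/eqP; rewrite -mdeg_eq0; exact: (valP e).
move=> X1; apply: (Hrk_finite_subsingleton _ X1) => [e e'|e].
  by do 2!apply: val_inj; rewrite !mon0.
by rewrite /form_coords mcoeff1 mon0 eqxx oner_neq0.
Qed.

Section FormsHrk.
Variables (C : numClosedFieldType) (n : nat).

Let mon d (e : mon_idx n d) : 'X_{1..n.+1} := val (val e).

Lemma mdeg_mon d (e : mon_idx n d) : mdeg (mon e) = d.
Proof. exact/eqP/(valP e). Qed.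

Lemma Hrk_finite_tangent_forms d (X : (mon_idx n d.+1 -> C) -> Prop) :
  (forall b, X (@form_coords C n d.+1 (tangent_form d b))) ->
  forall q, nonzero_vec q -> Hrk_finite X q.
Proof.
move=> X_tangent; pose B := d.+2; pose d1 : C := d.+1%:R.
have d1_neq0 : d1 != 0 by rewrite pnatr_eq0.
(* Since [sum_i e_i = d+1], this choice makes the coefficient of [L^d M] at [x^e]
   equal to [(L^(d+1))_e / (d+1) * (sum_i e_i B^i - z)]; the base [B] exceeds
   every exponent, so [e |-> sum_i e_i B^i] is injective. *)
pose b z (i : 'I_n.+1) := (B ^ i)%:R - z / d1.
apply: (Hrk_finite_pencil (g := fun e => (sumX C n.+1 ^+ d.+1)@_(mon e) / d1)
    (phi := fun e => (\sum_i mon e i * B ^ i)%:R)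
    (v := fun z => @form_coords C n d.+1 (tangent_form d (b z)))) => //.
- by move=> e; rewrite mulf_neq0 ?invr_eq0 ?mcoeff_sumX_exp_neq0 ?mdeg_mon.
- move=> e e' /eqP; rewrite eqr_nat => /eqP digits_eq.
  have mon_lt (f : mon_idx n d.+1) i : (mon f i < B)%N.
    by rewrite ltnS (leq_trans (mnm_le_mdeg _ i)) ?mdeg_mon.
  by do 2!apply: val_inj; apply/mnmP/(sum_digits_inj (mon_lt e) (mon_lt e')).
- move=> z e; apply: (mulIf d1_neq0); rewrite /form_coords mulr_natr mcoeff_tangent_form.
  have -> : \sum_i b z i * (mon e i)%:R = (\sum_i mon e i * B ^ i)%:R - z.
    rewrite (eq_bigr (fun i => (mon e i * B ^ i)%:R - z / d1 * (mon e i)%:R)) => [|i _].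
      by rewrite sumrB -natr_sum -mulr_sumr -natr_sum -mdegE mdeg_mon divfK.
    by rewrite mulrBl natrM mulrC.
  by rewrite mulrAC divfK // mulrC.
Qed.

Lemma tangential_Hrk_finite d q :
  nonzero_vec q -> Hrk_finite (@tangential C n d.+1) q.
Proof.
apply: Hrk_finite_tangent_forms => b P P_vanish; apply: P_vanish.
exists (sumX C n.+1), (\sum_i b i *: 'X_i).
by rewrite sumX_homog linear_form_homog.
Qed.

Lemma chow_Hrk_finite d q : nonzero_vec q -> Hrk_finite (@chow C n d) q.
Proof.
case: d q => [|d] q.
  by apply: Hrk_finite_deg0; exists (fun=> 0); split => [[] //|e]; rewrite big_ord0.
apply: Hrk_finite_tangent_forms => b.
exists (fun i : 'I_d.+1 => if (i < d)%N then sumX C n.+1 else \sum_i b i *: 'X_i).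
split => [i|e]; first by case: ifP => _; rewrite ?sumX_homog ?linear_form_homog.
by rewrite tangent_form_prod.
Qed.

Lemma reducible_Hrk_finite ds q :
  all (fun d => 0 < d)%N ds -> nonzero_vec q -> Hrk_finite (@reducible C n ds) q.
Proof.
case: ds q => [|[|d] ds] q //= _.
  by apply: Hrk_finite_deg0; exists (fun=> 0); split => [[] //|e]; rewrite big_ord0.
apply: (@Hrk_finite_tangent_forms (d + sumn ds)) => b.
exists (fun i : 'I_(size ds).+1 =>
  if i == ord0 then tangent_form d b else sumX C n.+1 ^+ nth 0%N (d.+1 :: ds) i).
split => [i|e].
  case: eqP => [->|_]; first exact: tangent_form_homog.
  by rewrite -[X in X.-homog]mul1n dhomogMn ?sumX_homog.
rewrite big_ord_recl eqxx /=; congr (form_coords _ _).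
have -> : \prod_(i < size ds) sumX C n.+1 ^+ nth 0%N ds i = sumX C n.+1 ^+ sumn ds.
  by rewrite -expr_sum sumnE (big_nth 0%N) big_mkord.
by rewrite /tangent_form mulrAC -exprD.
Qed.

End FormsHrk.


Lemma pluecker_idx_incr k n (f : pluecker_idx k n) : {homo val f : i j / (i < j)%N}.
Proof. by move=> i j; move: (valP f) => /forallP/(_ i)/forallP/(_ j)/implyP. Qed.

Lemma pluecker_idx_inj k n (f : pluecker_idx k n) : injective (val f).
Proof.
move=> i j fij; apply/eqP; apply: contraT; rewrite neq_ltn.
by case/orP => /(@pluecker_idx_incr _ _ f); rewrite fij ltnn.
Qed.

Lemma det_Vandermonde_cycle (R : comNzRingType) m (a : 'rV[R]_m.+1) :
  \det (\matrix_(i, j) a 0 j ^+ (ord_pred i).+1) =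
  (-1) ^+ perm (@ord_pred_inj m.+1) * \prod_j a 0 j * \det (Vandermonde m.+1 a).
Proof.
have -> : \matrix_(i, j) a 0 j ^+ (ord_pred i).+1 =
    row_perm (perm (@ord_pred_inj m.+1)) (Vandermonde m.+1 a *m diag_mx a).
  by apply/matrixP => i j; rewrite mul_mx_diag !mxE permE exprSr.
by rewrite row_permE !det_mulmx det_perm det_diag [_ * \prod_i _]mulrC mulrA.
Qed.

Section Grassmannian.
Variables (C : numClosedFieldType) (k' n : nat).
Local Notation k := k'.+1.

Definition node (l : nat) : C := (2 ^ 2 ^ l)%:R.

Definition pencil_mx (z : C) : 'M[C]_(k, n) :=
  \matrix_(i, l) (if i == ord0 then node l ^+ k - z else node l ^+ i).

Definition nodes_row (f : pluecker_idx k n) : 'rV[C]_k := \row_j node (val f j).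

Definition cycle_sign : C := (-1) ^+ perm (@ord_pred_inj k).

Lemma pluecker_pencil_mx f z :
  pluecker (pencil_mx z) f =
  \det (Vandermonde k (nodes_row f)) * (cycle_sign * \prod_j node (val f j) - z).
Proof.
have lift_neq0 (i : 'I_k') : lift ord0 i != ord0 by rewrite eq_sym neq_lift.
(* Split the first row [t^k - z] by linearity; [1] is the first row of the Vandermonde matrix. *)
rewrite /pluecker (@determinant_multilinear _ _ _
  (\matrix_(i, j) (nodes_row f) 0 j ^+ (ord_pred i).+1) (Vandermonde k (nodes_row f))
  ord0 1 (- z)).
- rewrite det_Vandermonde_cycle -/cycle_sign.
  under eq_bigr do rewrite mxE.
  ring.
- by apply/rowP => j; rewrite !mxE eqxx /= modn_small // mul1r expr0 mulr1.
- apply/matrixP => i j; rewrite !mxE (negbTE (lift_neq0 i)) /=.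
  by rewrite add0n modnDr modn_small // ltnS ltnW.
- by apply/matrixP => i j; rewrite !mxE (negbTE (lift_neq0 i)).
Qed.

Lemma node_inj : injective node.
Proof. by move=> a b /eqP; rewrite eqr_nat !eqn_exp2l // => /eqP. Qed.

(* [prod_j node (f j) = 2 ^ (sum_j 2 ^ f j)], whose binary digits are the indicator of the
   image of the increasing map [f]. *)
Lemma node_prod_inj : injective (fun f : pluecker_idx k n => \prod_j node (val f j)).
Proof.
move=> f f' /eqP; rewrite /node -!natr_prod -!expn_sum eqr_nat eqn_exp2l //.
rewrite !sum_expn_fibres => /eqP digits_eq.
have fibres_eq := sum_digits_inj (fibre_card_le1 (@pluecker_idx_inj _ _ f))
  (fibre_card_le1 (@pluecker_idx_inj _ _ f')) digits_eq.
apply/val_inj/ffunP.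
exact: incr_eq_of_fibres (@pluecker_idx_incr _ _ f) (@pluecker_idx_incr _ _ f') fibres_eq.
Qed.

Lemma grassmannian_Hrk_finite q : nonzero_vec q -> Hrk_finite (@grassmannian C k n) q.
Proof.
apply: (Hrk_finite_pencil (g := fun f => \det (Vandermonde k (nodes_row f)))
    (phi := fun f => cycle_sign * \prod_j node (val f j))
    (v := fun z => pluecker (pencil_mx z))).
- move=> f; rewrite det_Vandermonde; apply/prodf_neq0 => i _; apply/prodf_neq0 => j ij.
  rewrite !mxE subr_eq0; apply: contraTneq ij.
  by move=> /node_inj /val_inj /(@pluecker_idx_inj _ _ f) ->; rewrite ltnn.
- by move=> f f' /(mulfI (negbT (signr_eq0 _ _))) /node_prod_inj.
- by move=> z; exists (pencil_mx z).
- by move=> z f; rewrite pluecker_pencil_mx.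
Qed.

End Grassmannian.

Lemma sub_secant (F : fieldType) (I : finType) (Y : (I -> F) -> Prop) r :
  (0 < r)%N -> forall v, Y v -> secant r Y v.
Proof.
case: r => // r _ v Yv P P_vanish; apply: P_vanish.
exists (fun i => (i == ord0)%:R), (fun=> v); split => // j.
rewrite big_ord_recl eqxx mul1r big1 ?addr0 // => i _.
by rewrite eq_sym (negbTE (neq_lift _ _)) mul0r.
Qed.

Lemma Hrk_finite_Y_or_secant (F : fieldType) (I : finType) (Y X : (I -> F) -> Prop) :
  Y_or_secant Y X -> (forall q, nonzero_vec q -> Hrk_finite Y q) ->
  forall q, nonzero_vec q -> Hrk_finite X q.
Proof.
move=> Y_sub_X Y_Hrk q /Y_Hrk [m [m_gt0 [ps [ps_Y ps_q]]]].
exists m; split => //; exists ps; split => // i; have [Y_ps ps_neq0] := ps_Y i.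
by split => //; case: Y_sub_X => [-> //|[r [r_gt0 ->]]]; exact: sub_secant.
Qed.

Theorem mainTheorem9 (R : realType) :
  (forall (k n : nat), (1 <= k)%N -> (k < n)%N ->
     forall X, Y_or_secant (@grassmannian R[i] k n) X ->
     forall q, nonzero_vec q -> Hrk_finite X q) /\
  (forall (d n : nat), (1 <= d)%N -> (1 <= n)%N ->
     forall X, Y_or_secant (@tangential R[i] n d) X ->
     forall q, nonzero_vec q -> Hrk_finite X q) /\
  (forall (d n : nat),
     forall X, Y_or_secant (@chow R[i] n d) X ->
     forall q, nonzero_vec q -> Hrk_finite X q) /\
  (forall (n : nat) (ds : seq nat), all (fun x => (0 < x)%N) ds ->
     forall X, Y_or_secant (@reducible R[i] n ds) X ->
     forall q, nonzero_vec q -> Hrk_finite X q).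
Proof.
split; [|split; [|split]].
- move=> [|k] n // _ _ X /Hrk_finite_Y_or_secant; apply; exact: grassmannian_Hrk_finite.
- move=> [|d] n // _ _ X /Hrk_finite_Y_or_secant; apply; exact: tangential_Hrk_finite.
- move=> d n X /Hrk_finite_Y_or_secant; apply; exact: chow_Hrk_finite.
- move=> n ds ds_pos X /Hrk_finite_Y_or_secant; apply => q; exact: reducible_Hrk_finite.
Qed.
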